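(* (1) For any complete consistent first-order theory $T$, ${\rm deg}_{\rm acl}(T)\in(\omega\setminus\{0\})\cup\{\omega\}\cup\{\infty\}$. (2) For every $\lambda\in(\omega\setminus\{0\})\cup\{\omega,\infty\}$ there is a complete theory $T_\lambda$ with ${\rm deg}_{\rm acl}(T_\lambda)=\lambda$.
   Context: Let $T$ be a complete theory with monster model $\mathcal{M}$; sets of $T$ are subsets $A\subseteq M$. For $n\in\omega\setminus\{0\}$, ${\rm acl}_n(A)$ is the set of elements $b$ such that for some formula $\varphi(x,\overline{y})$ and tuple $\overline{a}$ from $A$, $\models\varphi(b,\overline{a})$ and $\varphi(x,\overline{a})$ has at most $n$ solutions; ${\rm acl}(A)$ is the usual algebraic closure. The degree of algebraization ${\rm deg}_{\rm acl}(A)$ is the least $n\in\omega\setminus\{0\}$ with ${\rm acl}(A)={\rm acl}_n(A)$, and ${\rm deg}_{\rm acl}(A)=\infty$ if there is no such $n$. The degree of algebraization ${\rm deg}_{\rm acl}(T)$ is the supremum of ${\rm deg}_{\rm acl}(A)$ over all sets $A$ of $T$, in the order $1<2<\dots<\omega<\infty$ (so it is $\infty$ if some $A$ has degree $\infty$, and $\omega$ if all degrees are finite but unbounded). *)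

From Stdlib Require Import Arith List Fin.
Import ListNotations.

Record signature : Type := {
  funs : Type;
  rels : Type;
  fun_ar : funs -> nat;
  rel_ar : rels -> nat
}.

Inductive term (L : signature) : Type :=
| tvar : nat -> term L
| tapp : forall f : funs L, (Fin.t (fun_ar L f) -> term L) -> term L.

Inductive formula (L : signature) : Type :=
| fFalse : formula L
| fEq : term L -> term L -> formula L
| fRel : forall r : rels L, (Fin.t (rel_ar L r) -> term L) -> formula L
| fImp : formula L -> formula L -> formula L
| fAll : formula L -> formula L.   (* binds variable 0 (de Bruijn) *)

Arguments tvar {L}. Arguments tapp {L}.
Arguments fFalse {L}. Arguments fEq {L}. Arguments fRel {L}.
Arguments fImp {L}. Arguments fAll {L}.

Definition fNot {L} (p : formula L) : formula L := fImp p fFalse.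

Record structure (L : signature) : Type := {
  carrier :> Type;
  fun_int : forall f : funs L, (Fin.t (fun_ar L f) -> carrier) -> carrier;
  rel_int : forall r : rels L, (Fin.t (rel_ar L r) -> carrier) -> Prop
}.
Arguments fun_int {L}. Arguments rel_int {L}.

Definition scons {X : Type} (x : X) (e : nat -> X) : nat -> X :=
  fun n => match n with 0 => x | S m => e m end.

Fixpoint eval {L} (M : structure L) (e : nat -> M) (t : term L) : M :=
  match t with
  | tvar n => e n
  | tapp f args => fun_int M f (fun i => eval M e (args i))
  end.

Fixpoint sat {L} (M : structure L) (e : nat -> M) (p : formula L) : Prop :=
  match p with
  | fFalse => False
  | fEq t u => eval M e t = eval M e u
  | fRel r args => rel_int M r (fun i => eval M e (args i))
  | fImp p q => sat M e p -> sat M e q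
  | fAll p => forall d : M, sat M (scons d e) p
  end.

Fixpoint term_bound {L} (k : nat) (t : term L) : Prop :=
  match t with
  | tvar n => n < k
  | tapp f args => forall i, term_bound k (args i)
  end.

Fixpoint bound {L} (k : nat) (p : formula L) : Prop :=
  match p with
  | fFalse => True
  | fEq t u => term_bound k t /\ term_bound k u
  | fRel r args => forall i, term_bound k (args i)
  | fImp p q => bound k p /\ bound k q
  | fAll p => bound (S k) p
  end.

Definition sentence {L} (p : formula L) : Prop := bound 0 p.

Definition theory (L : signature) : Type := formula L -> Prop.

(* M is a model of T (structures have nonempty universes; the members of T
   are sentences, so the environment is irrelevant). *)
Definition is_model {L} (T : theory L) (M : structure L) : Prop :=
  inhabited (carrier L M) /\ forall p, T p -> forall e : nat -> M, sat M e p.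

(* T is a complete consistent theory: a set of sentences having a model and
   deciding every sentence (semantically; equivalent to the syntactic notion
   by the completeness theorem). *)
Definition complete_theory {L} (T : theory L) : Prop :=
  (forall p, T p -> sentence p) /\
  (exists M : structure L, is_model T M) /\
  (forall p, sentence p ->
     (forall (M : structure L), is_model T M -> forall e : nat -> M, sat M e p) \/
     (forall (M : structure L), is_model T M -> forall e : nat -> M, sat M e (fNot p))).

(* acl_n(A) in M: b satisfies some phi(x, a_0..a_{k-1}) (x = variable 0,
   a_i = variable i+1, parameters from A) having at most n solutions. *)
Definition acl_n {L} (M : structure L) (A : M -> Prop) (n : nat) (b : M) : Prop :=
  exists (p : formula L) (k : nat) (a : nat -> M),
    bound (S k) p /\ (forall i, i < k -> A (a i)) /\
    sat M (scons b a) p /\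
    exists l : list M, length l <= n /\
      forall c : M, sat M (scons c a) p -> In c l.

Definition acl {L} (M : structure L) (A : M -> Prop) (b : M) : Prop :=
  exists n, acl_n M A n b.

(* Values 1 < 2 < ... < omega < infinity (dFin 0 is not a legal value). *)
Inductive dval : Type := dFin (n : nat) | dOmega | dInfty.

Definition dle (x y : dval) : Prop :=
  match x, y with
  | dFin m, dFin n => m <= n
  | dFin _, _ => True
  | dOmega, dFin _ => False
  | dOmega, _ => True
  | dInfty, dInfty => True
  | dInfty, _ => False
  end.

Definition degA_is {L} (M : structure L) (A : M -> Prop) (d : dval) : Prop :=
  match d with
  | dFin n => 1 <= n /\ (forall b, acl M A b <-> acl_n M A n b) /\
              (forall m, 1 <= m -> (forall b, acl M A b <-> acl_n M A m b) -> n <= m)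
  | dOmega => False
  | dInfty => forall n, 1 <= n -> ~ (forall b, acl M A b <-> acl_n M A n b)
  end.

Definition set_degree {L} (T : theory L) (d : dval) : Prop :=
  exists (M : structure L) (A : M -> Prop), is_model T M /\ degA_is M A d.

Definition degT_is {L} (T : theory L) (d : dval) : Prop :=
  (forall e, set_degree T e -> dle e d) /\
  (forall u, (forall e, set_degree T e -> dle e u) -> dle d u).

(* Every set A has a degree: the least n with acl(A) = acl_n(A), or infinity if there is
   none; omega never occurs for a single set.  Hence deg(T), the supremum over all sets, is
   infinity if some set has degree infinity, the largest finite degree if these are bounded,
   and omega otherwise.

   A pure set with n elements has degree n.  One unary predicate of size n for every n gives
   the empty set degree infinity.

   For omega, take keys of every level n, each owning a block of n points, with infinitely many
   copies of every block.  Copy swaps show that an element algebraic over A is linked to a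
   parameter: it equals one, is the key of one, or lies in the block of one or in a common block
   with one.  Rotating a block of level n is an automorphism, provided it shifts the "phase" by
   which each lower element selects an origin in that block; so naming a key of level n gives
   degree n.  Naming anything of lower level, however, orders the block from the selected origin
   and makes each of its points definable.  So over any A only the blocks of keys with nothing of
   A below them count, and these keys all have the same level.  The facts used are first-order,
   hence hold in every model of the theory. *)

From Stdlib Require Import Arith List Lia ZArith Wf_nat.
From Stdlib Require Import Classical ClassicalEpsilon FunctionalExtensionality Eqdep_dec.
Import ListNotations.

Definition fAnd {L} (p q : formula L) : formula L := fNot (fImp p (fNot q)).
Definition fOr {L} (p q : formula L) : formula L := fImp (fNot p) q.
Definition fEx {L} (p : formula L) : formula L := fNot (fAll (fNot p)).

Section Semantics.
Context {L : signature}.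
Implicit Types (M : structure L) (p q : formula L) (t : term L).

Lemma sat_and M e p q : sat M e (fAnd p q) <-> sat M e p /\ sat M e q.
Proof. cbn. split; [|tauto]. intro H. apply NNPP. tauto. Qed.

Lemma sat_or M e p q : sat M e (fOr p q) <-> sat M e p \/ sat M e q.
Proof. cbn. split; [|tauto]. intro H. apply NNPP. tauto. Qed.

Lemma sat_ex M e p : sat M e (fEx p) <-> exists d, sat M (scons d e) p.
Proof.
  cbn. split.
  - intro H. apply NNPP. intro Hno. apply H. intros d Hd. apply Hno. eauto.
  - intros [d Hd] H. exact (H d Hd).
Qed.

Lemma eval_agree M t k e e' : term_bound k t ->
  (forall i, i < k -> e i = e' i) -> eval M e t = eval M e' t.
Proof.
  revert k; induction t as [n|f args IH]; cbn; intros k Hb Ha.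
  - apply Ha, Hb.
  - f_equal. apply functional_extensionality. intro i. exact (IH i k (Hb i) Ha).
Qed.

Lemma sat_agree M p : forall k e e', bound k p ->
  (forall i, i < k -> e i = e' i) -> (sat M e p <-> sat M e' p).
Proof.
  induction p as [| t u | r args | p IHp q IHq | p IHp]; cbn; intros k e e' Hb Ha.
  - tauto.
  - destruct Hb. rewrite (eval_agree M t k e e'), (eval_agree M u k e e'); tauto.
  - replace (fun i => eval M e (args i)) with (fun i => eval M e' (args i)); [tauto|].
    apply functional_extensionality. intro i. symmetry. eapply eval_agree; eauto.
  - destruct Hb. rewrite (IHp k e e'), (IHq k e e'); tauto.
  - assert (Hs : forall d i, i < S k -> scons d e i = scons d e' i)
      by (intros d [|i] Hi; cbn; auto; apply Ha; lia).
    split; intros H d; [rewrite <- (IHp (S k) (scons d e))|rewrite (IHp (S k) (scons d e))];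
      auto.
Qed.

Lemma term_bound_mono t k k' : term_bound k t -> k <= k' -> term_bound k' t.
Proof. induction t; cbn; intros; eauto. lia. Qed.

Lemma bound_mono p : forall k k', bound k p -> k <= k' -> bound k' p.
Proof.
  induction p; cbn; intros; intuition eauto using term_bound_mono.
  eapply IHp; eauto; lia.
Qed.

Lemma fin_uniform_bound n (P : Fin.t n -> nat -> Prop) : (forall i, exists k, P i k) ->
  (forall i k k', P i k -> k <= k' -> P i k') -> exists K, forall i, P i K.
Proof.
  revert P; induction n as [|n IH]; intros P H Hm.
  - exists 0. intro i. inversion i.
  - destruct (H Fin.F1) as [k1 Hk1].
    destruct (IH (fun i => P (Fin.FS i))) as [K HK]; [auto|intros; eapply Hm; eauto|].
    exists (max k1 K). intro i. revert P H Hm Hk1 HK.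
    pattern i. apply Fin.caseS'; intros; eapply Hm; eauto; lia.
Qed.

Lemma term_bound_exists t : exists k, term_bound k t.
Proof.
  induction t as [n|f args IH]; cbn.
  - exists (S n); lia.
  - apply (fin_uniform_bound _ (fun i k => term_bound k (args i))); auto.
    intros; eapply term_bound_mono; eauto.
Qed.

Lemma bound_exists p : exists k, bound k p.
Proof.
  induction p as [| t u | r args | p [k1 ?] q [k2 ?] | p [k ?]]; cbn.
  - exists 0; auto.
  - destruct (term_bound_exists t) as [k1 ?], (term_bound_exists u) as [k2 ?].
    exists (max k1 k2); split; eapply term_bound_mono; eauto; lia.
  - apply (fin_uniform_bound _ (fun i k => term_bound k (args i))); auto using term_bound_exists.
    intros; eapply term_bound_mono; eauto.
  - exists (max k1 k2); split; eapply bound_mono; eauto; lia.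
  - exists k. eapply bound_mono; eauto.
Qed.

Fixpoint trename (xi : nat -> nat) (t : term L) : term L :=
  match t with
  | tvar n => tvar (xi n)
  | tapp f args => tapp f (fun i => trename xi (args i))
  end.

Definition up_ren (xi : nat -> nat) (n : nat) : nat :=
  match n with 0 => 0 | S m => S (xi m) end.

Fixpoint frename (xi : nat -> nat) (p : formula L) : formula L :=
  match p with
  | fFalse => fFalse
  | fEq t u => fEq (trename xi t) (trename xi u)
  | fRel r args => fRel r (fun i => trename xi (args i))
  | fImp p q => fImp (frename xi p) (frename xi q)
  | fAll p => fAll (frename (up_ren xi) p)
  end.

Lemma eval_rename M t xi e : eval M e (trename xi t) = eval M (fun n => e (xi n)) t.
Proof.
  induction t; cbn; auto. f_equal. apply functional_extensionality; auto.
Qed.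

Lemma sat_rename M p : forall xi e, sat M e (frename xi p) <-> sat M (fun n => e (xi n)) p.
Proof.
  induction p as [| t u | r args | p IHp q IHq | p IHp]; cbn; intros xi e.
  - tauto.
  - rewrite !eval_rename. tauto.
  - replace (fun i => eval M e (trename xi (args i)))
      with (fun i => eval M (fun n => e (xi n)) (args i)); [tauto|].
    apply functional_extensionality; intro; rewrite eval_rename; auto.
  - rewrite IHp, IHq. tauto.
  - assert (Hs : forall d, (fun n => scons d e (up_ren xi n)) = scons d (fun n => e (xi n)))
      by (intro d; apply functional_extensionality; intros [|n]; reflexivity).
    split; intros H d; specialize (H d); rewrite ?IHp, ?Hs in *; exact H.
Qed.

End Semantics.

(** * Theories of structures, automorphisms and algebraicity *)

Section Theories.
Context {L : signature}.
Implicit Types (M N : structure L) (p : formula L).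

Definition Th N : theory L := fun p => sentence p /\ forall e, sat N e p.

Fixpoint fAlls (k : nat) p : formula L :=
  match k with 0 => p | S k => fAll (fAlls k p) end.

Lemma bound_fAlls k : forall m p, bound m (fAlls k p) <-> bound (m + k) p.
Proof.
  induction k; cbn; intros m p; [rewrite Nat.add_0_r; tauto|].
  rewrite IHk. replace (S m + k) with (m + S k) by lia. tauto.
Qed.

Lemma sat_fAlls_intro M p : (forall e, sat M e p) -> forall k e, sat M e (fAlls k p).
Proof. intros H k; induction k; cbn; auto. Qed.

Lemma sat_fAlls_elim M k : forall p e, sat M e (fAlls k p) ->
  forall e', sat M (fun i => if i <? k then e' i else e (i - k)) p.
Proof.
  induction k as [|k IH]; simpl; intros p e H e'.
  - replace (fun i => e (i - 0)) with e; auto.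
    apply functional_extensionality; intro; f_equal; lia.
  - specialize (IH p (scons (e' k) e) (H (e' k)) e').
    replace (fun i => if i <? S k then e' i else e (i - S k))
      with (fun i => if i <? k then e' i else scons (e' k) e (i - k)); auto.
    apply functional_extensionality; intro i.
    destruct (Nat.ltb_spec i k), (Nat.ltb_spec i (S k)); try lia; auto.
    + replace i with k by lia. rewrite Nat.sub_diag. reflexivity.
    + replace (i - k) with (S (i - S k)) by lia. reflexivity.
Qed.

(* Valid formulas of N transfer through their universal closures. *)
Lemma Th_transfer N p : (forall e, sat N e p) ->
  forall M, is_model (Th N) M -> forall e, sat M e p.
Proof.
  intros H M [_ HM] e.
  destruct (bound_exists p) as [k Hk].
  assert (Hs : Th N (fAlls k p)).
  { split; [apply bound_fAlls; exact Hk|apply sat_fAlls_intro, H]. }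
  pose proof (sat_fAlls_elim M k p e (HM _ Hs e) e) as H1.
  rewrite (sat_agree M p k _ e Hk) in H1; auto.
  intros i Hi. destruct (Nat.ltb_spec i k); auto; lia.
Qed.

Lemma Th_model_self N : inhabited N -> is_model (Th N) N.
Proof. intros Hi. split; auto. intros p [_ H]; auto. Qed.

Lemma Th_complete N : inhabited N -> complete_theory (Th N).
Proof.
  intro Hi. split; [|split].
  - intros p [Hp _]; auto.
  - exists N. apply Th_model_self, Hi.
  - intros p Hp. destruct Hi as [x0].
    assert (Hcl : forall e, sat N e p <-> sat N (fun _ => x0) p)
      by (intro e; apply (sat_agree N p 0); auto; intros; lia).
    destruct (classic (sat N (fun _ => x0) p)) as [H|H]; [left|right];
      intros M HM e; apply (proj2 HM); split.
    + exact Hp.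
    + intro e'. rewrite Hcl. exact H.
    + cbn. auto.
    + intro e'. cbn. rewrite Hcl. exact H.
Qed.

Definition is_auto M (s : M -> M) : Prop :=
  (exists s' : M -> M, forall x, s (s' x) = x /\ s' (s x) = x) /\
  (forall f args, fun_int M f (fun i => s (args i)) = s (fun_int M f args)) /\
  (forall r args, rel_int M r (fun i => s (args i)) <-> rel_int M r args).

Lemma eval_auto M s : is_auto M s -> forall t e, eval M (fun n => s (e n)) t = s (eval M e t).
Proof.
  intros [_ [Hf _]]. induction t; cbn; intros; auto.
  rewrite <- Hf. f_equal. apply functional_extensionality; auto.
Qed.

Lemma sat_auto M s : is_auto M s -> forall p e, sat M (fun n => s (e n)) p <-> sat M e p.
Proof.
  intro Ha. pose proof Ha as [[s' Hs'] [_ Hr]].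
  induction p as [| t u | r args | p IHp q IHq | p IHp]; cbn; intros e.
  - tauto.
  - rewrite !(eval_auto M s Ha). split; intro H; [|congruence].
    rewrite <- (proj2 (Hs' (eval M e t))), <- (proj2 (Hs' (eval M e u))). congruence.
  - replace (fun i => eval M (fun n => s (e n)) (args i)) with (fun i => s (eval M e (args i)));
      [apply Hr|].
    apply functional_extensionality; intro; rewrite (eval_auto M s Ha); auto.
  - rewrite IHp, IHq; tauto.
  - split; intros H d.
    + rewrite <- IHp. specialize (H (s d)).
      replace (fun n => s (scons d e n)) with (scons (s d) (fun n => s (e n))); auto.
      apply functional_extensionality; intros [|n]; reflexivity.
    + specialize (H (s' d)). rewrite <- IHp in H.
      replace (scons d (fun n => s (e n))) with (fun n => s (scons (s' d) e n)); auto.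
      apply functional_extensionality; intros [|n]; cbn; auto. apply Hs'.
Qed.

Lemma sat_auto_image M s p k (a : nat -> M) b : is_auto M s -> bound (S k) p ->
  (forall i, i < k -> s (a i) = a i) -> sat M (scons b a) p -> sat M (scons (s b) a) p.
Proof.
  intros Ha Hb Hf H. rewrite <- (sat_auto M s Ha) in H.
  rewrite (sat_agree M p (S k) _ (scons (s b) a) Hb) in H; auto.
  intros [|i] Hi; cbn; auto. apply Hf; lia.
Qed.

Lemma conjugates_le_solutions M p k (a : nat -> M) b (cs : list M) :
  bound (S k) p -> sat M (scons b a) p -> NoDup cs ->
  (forall c, In c cs -> exists s, is_auto M s /\ (forall i, i < k -> s (a i) = a i) /\ s b = c) ->
  forall l, (forall c, sat M (scons c a) p -> In c l) -> length cs <= length l.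
Proof.
  intros Hb Hs Hnd Hc l Hl. apply NoDup_incl_length; auto.
  intros c Hin. destruct (Hc c Hin) as [s [Ha [Hf <-]]]. apply Hl.
  eapply sat_auto_image; eauto.
Qed.

Lemma acl_n_mono M A n m b : acl_n M A n b -> n <= m -> acl_n M A m b.
Proof.
  intros [p [k [a [H1 [H2 [H3 [l [H4 H5]]]]]]]] Hnm.
  exists p, k, a; repeat split; auto. exists l; split; auto; lia.
Qed.

Lemma acl_n_intro M (A : M -> Prop) p (a : nat -> M) b l n :
  (forall i, A (a i)) -> sat M (scons b a) p -> length l <= n ->
  (forall c, sat M (scons c a) p -> In c l) -> acl_n M A n b.
Proof.
  intros HA Hs Hl Hc. destruct (bound_exists p) as [k Hk].
  exists p, k, a. repeat split; auto; [eapply bound_mono; eauto; lia|]. exists l; auto.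
Qed.

Lemma acl_n_intro_noparam M (A : M -> Prop) p (a : nat -> M) b l n :
  bound 1 p -> sat M (scons b a) p -> length l <= n ->
  (forall c, sat M (scons c a) p -> In c l) -> acl_n M A n b.
Proof. intros Hb Hs Hl Hc. exists p, 0, a. repeat split; auto; [intros; lia|]. exists l; auto. Qed.

Lemma acl_n_acl M A n b : acl_n M A n b -> acl M A b.
Proof. intro; exists n; auto. Qed.

Lemma degA_exists M (A : M -> Prop) : (exists n, degA_is M A (dFin n)) \/ degA_is M A dInfty.
Proof.
  destruct (classic (exists n, 1 <= n /\ forall b, acl M A b <-> acl_n M A n b)) as [H|H].
  - left. destruct (dec_inh_nat_subset_has_unique_least_element _ (fun n => classic _) H)
      as [n [[[H1 H2] Hmin] _]].
    exists n. cbn. split; [auto|split; [auto|]]. intros m Hm1 Hm2. apply Hmin. auto.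
  - right. cbn. intros n Hn Hb. apply H. eauto.
Qed.

End Theories.

Section AtMost.
Context {L : signature}.
Implicit Types (M : structure L) (p chi : formula L).

Fixpoint fExs (k : nat) p : formula L :=
  match k with 0 => p | S k => fEx (fExs k p) end.

Definition env_prefix {X} (k : nat) (f e : nat -> X) : nat -> X :=
  fun j => if j <? k then f j else e (j - k).

Lemma sat_fExs M k : forall p e,
  sat M e (fExs k p) <-> exists f : nat -> M, sat M (env_prefix k f e) p.
Proof.
  induction k as [|k IH]; intros p e; cbn [fExs].
  - assert (Hpre : forall f, env_prefix 0 f e = e)
      by (intro f; apply functional_extensionality; intro j; unfold env_prefix; cbn; f_equal; lia).
    split; [intro H; exists e|intros [f H]]; rewrite Hpre in *; exact H.
  - assert (Hpre : forall f, env_prefix k f (scons (f k) e) = env_prefix (S k) f e).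
    { intro f. unfold env_prefix; apply functional_extensionality; intro j.
      destruct (Nat.ltb_spec j k), (Nat.ltb_spec j (S k)); try lia; auto.
      - replace j with k by lia. rewrite Nat.sub_diag. reflexivity.
      - replace (j - k) with (S (j - S k)) by lia. reflexivity. }
    rewrite sat_ex. split.
    + intros [d Hd]. rewrite IH in Hd. destruct Hd as [f Hf].
      exists (fun j => if j <? k then f j else d). rewrite <- Hpre.
      replace (env_prefix k (fun j => if j <? k then f j else d) _)
        with (env_prefix k f (scons d e)); [exact Hf|].
      unfold env_prefix; apply functional_extensionality; intro j.
      destruct (Nat.ltb_spec j k); rewrite ?Nat.ltb_irrefl; auto.
    + intros [f Hf]. exists (f k). rewrite IH. exists f. rewrite Hpre. exact Hf.
Qed.

Fixpoint fEqSome (s : nat) : formula L :=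
  match s with 0 => fFalse | S s => fOr (fEq (tvar 0) (tvar (S s))) (fEqSome s) end.

Lemma sat_fEqSome M s : forall e, sat M e (fEqSome s) <-> exists j, 1 <= j <= s /\ e 0 = e j.
Proof.
  induction s as [|s IH]; intros e; cbn [fEqSome].
  - cbn. split; [tauto|]. intros [j [? _]]; lia.
  - rewrite sat_or, IH. cbn. split.
    + intros [H|[j [Hj H]]]; [exists (S s)|exists j]; split; auto; lia.
    + intros [j [Hj H]]. destruct (Nat.eq_dec j (S s)) as [->|]; [auto|].
      right; exists j; split; auto; lia.
Qed.

(* [fAtMost s chi] says: there are [x_1, ..., x_s] covering every [x_0] satisfying [chi];
   the renaming makes room for the [s] quantified variables below the parameters of [chi]. *)
Definition at_most_ren (s : nat) (n : nat) : nat :=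
  match n with 0 => 0 | S j => S (j + s) end.

Definition fAtMost (s : nat) chi : formula L :=
  fExs s (fAll (fImp (frename (at_most_ren s) chi) (fEqSome s))).

Lemma sat_fAtMost M s chi e :
  sat M e (fAtMost s chi) <-> exists l, length l = s /\ forall z, sat M (scons z e) chi -> In z l.
Proof.
  unfold fAtMost. rewrite sat_fExs.
  assert (Hren : forall f z, (fun n => scons z (env_prefix s f e) (at_most_ren s n)) = scons z e).
  { intros f z. apply functional_extensionality; intros [|n]; cbn; auto. unfold env_prefix.
    destruct (Nat.ltb_spec (n + s) s); try lia. f_equal; lia. }
  split.
  - intros [f Hf]. exists (map f (seq 0 s)). rewrite length_map, length_seq. split; auto.
    intros z Hz. specialize (Hf z). cbn [sat] in Hf. rewrite sat_rename, Hren, sat_fEqSome in Hf.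
    destruct (Hf Hz) as [[|j] [Hj Hz']]; [lia|]. cbn in Hz'. unfold env_prefix in Hz'.
    destruct (Nat.ltb_spec j s); try lia. rewrite Hz'. apply in_map, in_seq. lia.
  - intros [l [Hl Hc]]. exists (fun j => nth j l (e 0)). intros z Hz.
    rewrite sat_rename, Hren in Hz. rewrite sat_fEqSome.
    destruct (In_nth l z (e 0) (Hc z Hz)) as [j [Hj Hn]]. exists (S j). split; [lia|].
    cbn. unfold env_prefix. destruct (Nat.ltb_spec j s); try lia. auto.
Qed.

End AtMost.

Lemma pad_list {X} (d : X) (P : X -> Prop) l s : length l <= s -> (forall z, P z -> In z l) ->
  exists l', length l' = s /\ forall z, P z -> In z l'.
Proof.
  intros Hl Hc. exists (l ++ repeat d (s - length l)). rewrite length_app, repeat_length.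
  split; [lia|]. intros z Hz. apply in_or_app; auto.
Qed.

Lemma nat_fun_bounded (f : nat -> nat) k : exists c, forall j, j < k -> f j < c.
Proof.
  induction k as [|k [c Hc]]; [exists 0; lia|].
  exists (max c (S (f k))). intros j Hj.
  destruct (Nat.eq_dec j k) as [->|]; [lia|]. specialize (Hc j). lia.
Qed.

(** * Every complete theory has a degree *)

Lemma nat_bounded_max (P : nat -> Prop) N : (exists m, P m) -> (forall m, P m -> m <= N) ->
  exists K, P K /\ forall m, P m -> m <= K.
Proof.
  induction N as [|N IH]; intros [m Hm] Hb.
  - exists m. split; auto. intros m' Hm'. specialize (Hb m' Hm'). lia.
  - destruct (classic (P (S N))) as [HN|HN]; [exists (S N); auto|].
    apply IH; [eauto|]. intros m' Hm'. specialize (Hb m' Hm').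
    destruct (Nat.eq_dec m' (S N)); [subst; contradiction|lia].
Qed.

Lemma degT_exists {L} (T : theory L) : complete_theory T -> exists d, degT_is T d /\ d <> dFin 0.
Proof.
  intros [_ [[M HM] _]].
  assert (Hsome : exists d, set_degree T d).
  { destruct (degA_exists M (fun _ => False)) as [[n Hn]|Hn];
      eexists; exists M, (fun _ => False); eauto. }
  destruct (classic (set_degree T dInfty)) as [Hinf|Hinf].
  - exists dInfty. split; [split|discriminate].
    + intros [] _; cbn; auto.
    + intros u Hu. exact (Hu _ Hinf).
  - assert (Hfin : forall d, set_degree T d -> exists m, d = dFin m /\ 1 <= m).
    { intros [m| |] (N & A & HN & HA).
      - exists m. split; [reflexivity|apply HA].
      - destruct HA.
      - exfalso. apply Hinf. exists N, A. auto. }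
    destruct (classic (exists N, forall m, set_degree T (dFin m) -> m <= N)) as [[N HN]|Hunb].
    + destruct (nat_bounded_max (fun m => set_degree T (dFin m)) N) as [K [HK HKmax]]; auto.
      { destruct Hsome as [d Hd]. destruct (Hfin d Hd) as [m [-> _]]. eauto. }
      exists (dFin K). split; [split|].
      * intros d Hd. destruct (Hfin d Hd) as [m [-> _]]. exact (HKmax m Hd).
      * intros u Hu. exact (Hu _ HK).
      * destruct (Hfin _ HK) as [m [[= <-] Hm]]. intros [= ->]. lia.
    + exists dOmega. split; [split|discriminate].
      * intros d Hd. destruct (Hfin d Hd) as [m [-> _]]. exact I.
      * intros [N| |] Hu; cbn; auto. apply Hunb. exists N. intros m Hm. exact (Hu _ Hm).
Qed.

(** * Degrees n and infinity *)

Lemma degT_Th_fin {L} (N : structure L) n : 1 <= n -> inhabited N ->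
  (forall M, is_model (Th N) M -> forall A b, acl M A b -> acl_n M A n b) ->
  (exists A, degA_is N A (dFin n)) -> degT_is (Th N) (dFin n).
Proof.
  intros Hn Hi Hup [A0 HA0]. split.
  - intros [m| |] [M [A [HM Hd]]]; cbn in *.
    + destruct Hd as [_ [_ Hmin]]. apply Hmin; auto.
      intro b; split; [apply Hup; auto|apply acl_n_acl].
    + auto.
    + apply (Hd n Hn). intro b; split; [apply Hup; auto|apply acl_n_acl].
  - intros u Hu. apply Hu. exists N, A0. split; auto. apply Th_model_self; auto.
Qed.

Lemma degT_Th_infty {L} (N : structure L) : inhabited N ->
  (exists A, degA_is N A dInfty) -> degT_is (Th N) dInfty.
Proof.
  intros Hi [A0 HA0]. split.
  - intros [] _; cbn; auto.
  - intros u Hu. apply Hu. exists N, A0. split; auto using Th_model_self.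
Qed.

Lemma degT_Th_omega {L} (N : structure L) : inhabited N ->
  (forall M, is_model (Th N) M -> forall A,
     exists n, 1 <= n /\ forall b, acl M A b -> acl_n M A n b) ->
  (forall n, exists A b, acl N A b /\ ~ acl_n N A n b) -> degT_is (Th N) dOmega.
Proof.
  intros Hi Hup Hlow. split.
  - intros [m| |] [M [A [HM Hd]]]; cbn in *; auto.
    destruct (Hup M HM A) as [n [Hn Hnb]].
    apply (Hd n Hn). intro b; split; [apply Hnb|apply acl_n_acl].
  - intros [n| |] Hu; cbn; auto.
    destruct (Hlow n) as [A [b [Hb Hnb]]].
    destruct (degA_exists N A) as [[m Hm]|Hm];
      assert (Hdeg := Hu _ (ex_intro _ N (ex_intro _ A (conj (Th_model_self N Hi) Hm))));
      cbn in Hdeg.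
    + destruct Hm as [_ [Hm _]]. apply Hnb. eapply acl_n_mono; [apply Hm; auto|auto].
    + exact Hdeg.
Qed.

Definition transp {X} (x y z : X) : X :=
  if excluded_middle_informative (z = x) then y
  else if excluded_middle_informative (z = y) then x else z.

Lemma transp_invol {X} (x y z : X) : transp x y (transp x y z) = z.
Proof. unfold transp. repeat (destruct excluded_middle_informative; subst; try congruence). Qed.

Lemma transp_l {X} (x y : X) : transp x y x = y.
Proof. unfold transp. destruct excluded_middle_informative; congruence. Qed.

Lemma transp_other {X} (x y z : X) : z <> x -> z <> y -> transp x y z = z.
Proof. unfold transp. intros. repeat destruct excluded_middle_informative; congruence. Qed.

Lemma transp_inj {X} (x y z z' : X) : transp x y z = transp x y z' -> z = z'.
Proof. intro H. rewrite <- (transp_invol x y z), H. apply transp_invol. Qed.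

Fixpoint fin_enum (n : nat) : list (Fin.t n) :=
  match n with 0 => [] | S m => Fin.F1 :: map Fin.FS (fin_enum m) end.

Lemma fin_enum_complete n (i : Fin.t n) : In i (fin_enum n).
Proof. induction i; cbn; auto. right. apply in_map; auto. Qed.

Lemma fin_enum_NoDup n : NoDup (fin_enum n).
Proof.
  induction n; cbn; constructor.
  - intro H. apply in_map_iff in H. destruct H as [x [H _]]. inversion H.
  - apply NoDup_map_NoDup_ForallPairs; auto. intros x y _ _. apply Fin.FS_inj.
Qed.

Lemma fin_enum_length n : length (fin_enum n) = n.
Proof. induction n; cbn; auto. rewrite length_map; auto. Qed.

Definition L_empty : signature :=
  {| funs := Empty_set; rels := Empty_set;
     fun_ar := fun f => match f with end; rel_ar := fun r => match r with end |}.

Definition pure_set (n : nat) : structure L_empty :=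
  @Build_structure L_empty (Fin.t n)
    (fun f : Empty_set => match f with end) (fun r : Empty_set => match r with end).

Lemma transp_pure_set_auto n (x y : pure_set n) : is_auto (pure_set n) (transp x y).
Proof.
  split; [|split; intros []].
  exists (transp x y); intro; split; apply transp_invol.
Qed.

Lemma degT_pure_set n : 1 <= n -> degT_is (Th (pure_set n)) (dFin n).
Proof.
  intros Hn. destruct n as [|n']; [lia|]. set (n := S n').
  assert (Hi : inhabited (pure_set n)) by (constructor; exact Fin.F1).
  assert (Hup : forall M, is_model (Th (pure_set n)) M -> forall A b, acl_n M A n b).
  { intros M HM A b.
    assert (Hsize : forall e, sat (pure_set n) e (fAtMost n (fEq (tvar 0) (tvar 0)))).
    { intro e. apply sat_fAtMost. exists (fin_enum n).
      split; [apply fin_enum_length|intros z _; apply fin_enum_complete]. }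
    destruct (proj1 (sat_fAtMost _ _ _ _) (Th_transfer _ _ Hsize M HM (fun _ => b)))
      as [l [Hl Hc]].
    apply (acl_n_intro_noparam M A (fEq (tvar 0) (tvar 0)) (fun _ => b) b l); cbn; auto; lia. }
  apply degT_Th_fin; [lia|auto|intros M HM A b _; apply Hup; auto|].
  exists (fun _ => False). cbn. split; [lia|split].
  - intro b; split; [intro; apply Hup, Th_model_self, Hi|apply acl_n_acl].
  - intros m Hm Hacl.
    destruct (proj1 (Hacl Fin.F1)) as [p [k [a [Hb [HA [Hs [l [Hl Hc]]]]]]]];
      [exists n; apply Hup, Th_model_self, Hi|].
    enough (length (fin_enum n) <= length l) by (rewrite fin_enum_length in *; lia).
    refine (conjugates_le_solutions (pure_set n) p k a Fin.F1 _ Hb Hs (fin_enum_NoDup n) _ l Hc).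
    intros c _. exists (transp Fin.F1 c).
    split; [apply transp_pure_set_auto|split; [intros i Hi'; destruct (HA i Hi')|apply transp_l]].
Qed.

Definition L_sized : signature :=
  {| funs := Empty_set; rels := nat;
     fun_ar := fun f => match f with end; rel_ar := fun _ => 1 |}.

Definition sized_blocks : structure L_sized :=
  @Build_structure L_sized {n : nat & Fin.t n}
    (fun f : Empty_set => match f with end)
    (fun (r : nat) (args : Fin.t 1 -> {n : nat & Fin.t n}) => projT1 (args Fin.F1) = r).

Lemma transp_sized_blocks_auto (x y : sized_blocks) : projT1 x = projT1 y ->
  is_auto sized_blocks (transp x y).
Proof.
  intro Hxy. split; [|split; [intros []|]].
  - exists (transp x y); intro; split; apply transp_invol.
  - intros r args. cbn. unfold transp.
    repeat destruct excluded_middle_informative as [->|]; rewrite ?Hxy; tauto.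
Qed.

Lemma degT_sized_blocks : degT_is (Th sized_blocks) dInfty.
Proof.
  apply degT_Th_infty; [constructor; exact (existT _ 1 Fin.F1)|].
  exists (fun _ => False).
  destruct (degA_exists sized_blocks (fun _ => False)) as [[m [Hm1 [Hm2 _]]]|Hm]; auto.
  exfalso.
  set (blk := map (existT Fin.t (S m)) (fin_enum (S m))).
  assert (Hblk : length blk = S m) by (unfold blk; rewrite length_map, fin_enum_length; auto).
  assert (Hb : acl sized_blocks (fun _ => False) (existT Fin.t (S m) Fin.F1)).
  { exists (S m).
    apply (acl_n_intro_noparam sized_blocks _ (fRel (S m : rels L_sized) (fun _ => tvar 0))
             (fun _ => existT Fin.t 1 Fin.F1) _ blk);
      [cbn; intros; lia|reflexivity|exact (Nat.eq_le_incl _ _ Hblk)|].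
    intros [n' i] Hc. cbn in Hc. subst n'. apply in_map, fin_enum_complete. }
  destruct (proj1 (Hm2 _) Hb) as [p [k [a [Hbd [HA [Hs [l [Hl Hc]]]]]]]].
  enough (length blk <= length l) by lia.
  refine (conjugates_le_solutions sized_blocks p k a _ blk Hbd Hs _ _ l Hc).
  - apply NoDup_map_NoDup_ForallPairs; [|apply fin_enum_NoDup].
    intros x y _ _. apply inj_pair2_eq_dec, Nat.eq_dec.
  - intros c Hin. exists (transp (existT Fin.t (S m) Fin.F1) c).
    split; [|split; [intros i Hi'; destruct (HA i Hi')|apply transp_l]].
    apply transp_sized_blocks_auto.
    unfold blk in Hin. apply in_map_iff in Hin. destruct Hin as [j [<- _]]. reflexivity.
Qed.

(** * Definable points of definably ordered finite sets *)

Lemma finite_order_has_max {X} (R : X -> X -> Prop) l (P : X -> Prop) :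
  (forall c, P c -> In c l) -> (exists b, P b) ->
  (forall u, P u -> ~ R u u) -> (forall u v w, P u -> P v -> P w -> R u v -> R v w -> R u w) ->
  exists mx, P mx /\ forall z, P z -> ~ R mx z.
Proof.
  revert P; induction l as [|a l IH]; intros P Hc Hne Hirr Htr.
  - destruct Hne as [b Hb]. destruct (Hc b Hb).
  - destruct (classic (exists b, P b /\ b <> a)) as [Hne'|Hne'].
    + destruct (IH (fun c => P c /\ c <> a)) as [mx [[Hmx Hmxa] Hmax]]; auto.
      * intros c [Hc1 Hc2]. destruct (Hc c Hc1); [congruence|auto].
      * intros u [Hu _]; auto.
      * intros u v w [Hu _] [Hv _] [Hw _]; eauto.
      * destruct (classic (P a /\ R mx a)) as [[Ha Hra]|Hna].
        -- exists a. split; auto. intros z Hz Haz.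
           destruct (classic (z = a)) as [->|Hza]; [exact (Hirr a Ha Haz)|].
           apply (Hmax z); [split; auto|apply (Htr mx a z); auto].
        -- exists mx. split; auto. intros z Hz Hmz.
           destruct (classic (z = a)) as [->|Hza]; [tauto|]. apply (Hmax z); auto.
    + assert (Hall : forall b, P b -> b = a) by (intros b Hb; apply NNPP; intro; apply Hne'; eauto).
      exists a. destruct Hne as [b Hb]. rewrite <- (Hall b Hb).
      split; auto. intros z Hz. rewrite (Hall z Hz), <- (Hall b Hb). auto.
Qed.

Section DefinableOrder.
Context {L : signature} (M : structure L) (O : formula L).

(* [O] is read as a relation [O(x_0, x_1)] with parameters from variable 2 on, while [chi] is
   read as a predicate [chi(x_0)] with parameters from variable 1 on. *)
Definition ren_skip1 (n : nat) : nat := match n with 0 => 0 | S j => S (S j) end.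
Definition ren_swap01 (n : nat) : nat := match n with 0 => 1 | 1 => 0 | S (S j) => S (S j) end.

Definition fMaximal (chi : formula L) : formula L :=
  fAnd chi (fAll (fImp (frename ren_skip1 chi) (fNot (frename ren_swap01 O)))).
Definition fNotMaximal (chi : formula L) : formula L :=
  fEx (fAnd (frename ren_skip1 chi) (frename ren_swap01 O)).

Lemma env_skip1 (x z : M) e : (fun n => scons z (scons x e) (ren_skip1 n)) = scons z e.
Proof. apply functional_extensionality; intros [|n]; reflexivity. Qed.

Lemma env_swap01 (x z : M) e :
  (fun n => scons z (scons x e) (ren_swap01 n)) = scons x (scons z e).
Proof. apply functional_extensionality; intros [|[|n]]; reflexivity. Qed.

Lemma sat_fMaximal chi x e : sat M (scons x e) (fMaximal chi) <->
  sat M (scons x e) chi /\ forall z, sat M (scons z e) chi -> ~ sat M (scons x (scons z e)) O.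
Proof.
  unfold fMaximal. rewrite sat_and. unfold fNot. cbn [sat].
  setoid_rewrite sat_rename. setoid_rewrite env_skip1. setoid_rewrite env_swap01. tauto.
Qed.

Lemma sat_fNotMaximal chi x e : sat M (scons x e) (fNotMaximal chi) <->
  exists z, sat M (scons z e) chi /\ sat M (scons x (scons z e)) O.
Proof.
  unfold fNotMaximal. rewrite sat_ex. setoid_rewrite sat_and. setoid_rewrite sat_rename.
  setoid_rewrite env_skip1. setoid_rewrite env_swap01. tauto.
Qed.

(* Peel off maximal elements: the maximum is defined by [fMaximal chi], the rest by
   [chi /\ fNotMaximal chi], a set with one element less. *)
Lemma definable_in_finite_order n chi e (l : list M) : length l <= n ->
  (forall c, sat M (scons c e) chi -> In c l) ->
  (forall u, sat M (scons u e) chi -> ~ sat M (scons u (scons u e)) O) ->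
  (forall u v w, sat M (scons u e) chi -> sat M (scons v e) chi -> sat M (scons w e) chi ->
     sat M (scons u (scons v e)) O -> sat M (scons v (scons w e)) O ->
     sat M (scons u (scons w e)) O) ->
  (forall u v, sat M (scons u e) chi -> sat M (scons v e) chi -> u <> v ->
     sat M (scons u (scons v e)) O \/ sat M (scons v (scons u e)) O) ->
  forall b, sat M (scons b e) chi ->
  exists psi, sat M (scons b e) psi /\ forall c, sat M (scons c e) psi -> c = b.
Proof.
  revert chi l; induction n as [|n IH]; intros chi l Hl Hc Hirr Htr Htot b Hb.
  - destruct l; [destruct (Hc b Hb)|cbn in Hl; lia].
  - set (P c := sat M (scons c e) chi).
    set (R u v := sat M (scons u (scons v e)) O).
    destruct (finite_order_has_max R l P Hc (ex_intro _ b Hb) Hirr Htr) as [mx [Hmx Hmax]].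
    destruct (classic (b = mx)) as [->|Hbm].
    + exists (fMaximal chi). rewrite sat_fMaximal. split; [split; auto|].
      intros c Hc'. rewrite sat_fMaximal in Hc'. destruct Hc' as [Hc1 Hc2].
      apply NNPP; intro Hne. destruct (Htot c mx Hc1 Hmx Hne) as [H|H].
      * exact (Hc2 mx Hmx H).
      * exact (Hmax c Hc1 H).
    + set (chi' := fAnd chi (fNotMaximal chi)).
      assert (Hchi' : forall c, sat M (scons c e) chi' <-> P c /\ exists z, P z /\ R c z).
      { intro c. unfold chi'. rewrite sat_and, sat_fNotMaximal. tauto. }
      destruct (in_split mx l (Hc mx Hmx)) as [l1 [l2 Heq]].
      apply (IH chi' (l1 ++ l2)).
      * subst l. rewrite length_app in *. cbn in Hl. lia.
      * intros c Hc'. apply Hchi' in Hc'. destruct Hc' as [Hc1 [z [Hz1 Hz2]]].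
        assert (c <> mx) by (intro; subst; exact (Hmax z Hz1 Hz2)).
        pose proof (Hc c Hc1) as Hin. rewrite Heq in Hin.
        apply in_app_or in Hin. apply in_or_app. destruct Hin as [|[|]]; auto; congruence.
      * intros u Hu. apply Hchi' in Hu. apply Hirr; tauto.
      * intros u v w Hu Hv Hw. apply Hchi' in Hu, Hv, Hw. apply Htr; tauto.
      * intros u v Hu Hv. apply Hchi' in Hu, Hv. apply Htot; tauto.
      * apply Hchi'. split; auto. exists mx. split; auto.
        destruct (Htot b mx Hb Hmx Hbm) as [H|H]; auto. exfalso; exact (Hmax b Hb H).
Qed.

End DefinableOrder.

(** * Degree omega: keyed blocks *)

Inductive rel_kb := rKey | rInBlock | rSameBlock | rBelow | rOrd.

Definition rel_kb_ar (r : rel_kb) : nat :=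
  match r with rKey => 1 | rInBlock | rSameBlock | rBelow => 2 | rOrd => 3 end.

Definition L_kb : signature :=
  {| funs := Empty_set; rels := rel_kb; fun_ar := fun f => match f with end; rel_ar := rel_kb_ar |}.

(* [EKey n c w] is the key of level [n] in copy [c]; its block consists of the [n] points
   [EPt i d c w] with [i + S d = n].  For [m] above the level of an element, the phase
   [w m] is the origin that this element selects in the blocks of level [m]. *)
Inductive elt := EKey (n c : nat) (w : nat -> Z) | EPt (i d c : nat) (w : nat -> Z).

Definition level (x : elt) : nat := match x with EKey n _ _ => n | EPt i d _ _ => i + S d end.
Definition copy (x : elt) : nat := match x with EKey _ c _ | EPt _ _ c _ => c end.
Definition phase (x : elt) : nat -> Z := match x with EKey _ _ w | EPt _ _ _ w => w end.
Definition index (x : elt) : nat := match x with EKey _ _ _ => 0 | EPt i _ _ _ => i end.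
Definition is_key (x : elt) : Prop := match x with EKey _ _ _ => True | _ => False end.
Definition is_pt (x : elt) : Prop := match x with EPt _ _ _ _ => True | _ => False end.

Definition SameBlock (t x : elt) : Prop :=
  is_pt x /\ level t = level x /\ copy t = copy x /\ phase t = phase x.

Definition InBlock (k x : elt) : Prop := is_key k /\ SameBlock k x.

Definition Below (t y : elt) : Prop :=
  (is_key y /\ level y < level t) \/ (is_pt y /\ level y <= level t).

Definition origin (m : nat) (y : elt) : Z :=
  match y with
  | EKey _ _ w => w m
  | EPt i _ _ w => if level y =? m then Z.of_nat i else w m
  end.

Definition offset (m : nat) (o : Z) (i : nat) : Z := ((Z.of_nat i - o) mod Z.of_nat m)%Z.

(* [Ord y u v]: in their common block, [u] precedes [v] when counting cyclically from the
   origin selected by [y]. *)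
Definition Ord (y u v : elt) : Prop :=
  SameBlock u v /\ is_pt u /\ Below u y /\
  (offset (level u) (origin (level u) y) (index u) <
   offset (level u) (origin (level u) y) (index v))%Z.

Definition interp_kb (r : rel_kb) : (Fin.t (rel_kb_ar r) -> elt) -> Prop :=
  match r as r0 return (Fin.t (rel_kb_ar r0) -> elt) -> Prop with
  | rKey => fun a => is_key (a Fin.F1)
  | rInBlock => fun a => InBlock (a Fin.F1) (a (Fin.FS Fin.F1))
  | rSameBlock => fun a => SameBlock (a Fin.F1) (a (Fin.FS Fin.F1))
  | rBelow => fun a => Below (a Fin.F1) (a (Fin.FS Fin.F1))
  | rOrd => fun a => Ord (a Fin.F1) (a (Fin.FS Fin.F1)) (a (Fin.FS (Fin.FS Fin.F1)))
  end.

Definition Mkb : structure L_kb :=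
  @Build_structure L_kb elt (fun f : Empty_set => match f with end) interp_kb.

Lemma pt_ext x y : is_pt x -> is_pt y -> level x = level y -> index x = index y ->
  copy x = copy y -> phase x = phase y -> x = y.
Proof. destruct x, y; cbn; intros; try contradiction. subst. f_equal; lia. Qed.

Lemma key_ext x y : is_key x -> is_key y -> level x = level y ->
  copy x = copy y -> phase x = phase y -> x = y.
Proof. destruct x, y; cbn; intros; try contradiction. subst. auto. Qed.

Lemma key_or_pt x : (is_key x /\ ~ is_pt x) \/ (is_pt x /\ ~ is_key x).
Proof. destruct x; cbn; tauto. Qed.

Lemma index_lt_level x : is_pt x -> index x < level x.
Proof. destruct x; cbn; intros; [contradiction|lia]. Qed.

Lemma origin_key m y : is_key y -> origin m y = phase y m.
Proof. destruct y; cbn; tauto. Qed.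

Lemma origin_pt m y : is_pt y ->
  origin m y = if level y =? m then Z.of_nat (index y) else phase y m.
Proof. destruct y; cbn; tauto. Qed.

Lemma offset_inj m o i j : i < m -> j < m -> offset m o i = offset m o j -> i = j.
Proof.
  intros Hi Hj H. unfold offset in H.
  assert (Hd : ((Z.of_nat i - Z.of_nat j) mod Z.of_nat m = 0)%Z).
  { replace (Z.of_nat i - Z.of_nat j)%Z with ((Z.of_nat i - o) - (Z.of_nat j - o))%Z by lia.
    rewrite Zminus_mod, H, Z.sub_diag. apply Z.mod_0_l. lia. }
  apply Z.mod_divide in Hd; [|lia]. destruct Hd as [q Hq].
  destruct (Z.lt_trichotomy q 0) as [Hq0|[Hq0|Hq0]]; [nia|subst; lia|nia].
Qed.

Lemma is_auto_kb (s : elt -> elt) : (exists s', forall x, s (s' x) = x /\ s' (s x) = x) ->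
  (forall x, is_key (s x) <-> is_key x) ->
  (forall k x, InBlock (s k) (s x) <-> InBlock k x) ->
  (forall k x, SameBlock (s k) (s x) <-> SameBlock k x) ->
  (forall k x, Below (s k) (s x) <-> Below k x) ->
  (forall y u v, Ord (s y) (s u) (s v) <-> Ord y u v) -> is_auto Mkb s.
Proof. intros Hinv H1 H2 H3 H4 H5. split; [auto|split; [intros []|intros []; cbn; auto]]. Qed.

(* [rot n r] turns every block of level [n] by [r] steps; to keep [Ord] invariant it moves the
   origins selected by lower elements along, so it fixes all elements of level above [n]. *)
Definition shift_phase (n : nat) (r : Z) (m : nat) (w : nat -> Z) : nat -> Z :=
  if m <? n then fun j => if j =? n then (w j + r)%Z else w j else w.

Definition rotate_index (n : nat) (r : Z) (i : nat) : nat :=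
  Z.to_nat ((Z.of_nat i + r) mod Z.of_nat n).

Definition rot (n : nat) (r : Z) (x : elt) : elt :=
  match x with
  | EKey m c w => EKey m c (shift_phase n r m w)
  | EPt i d c w =>
      let m := i + S d in
      let i' := if m =? n then rotate_index n r i else i in
      EPt i' (m - S i') c (shift_phase n r m w)
  end.

Lemma rotate_index_Z n r i : i < n ->
  Z.of_nat (rotate_index n r i) = ((Z.of_nat i + r) mod Z.of_nat n)%Z.
Proof.
  intro H. unfold rotate_index. pose proof (Z.mod_pos_bound (Z.of_nat i + r) (Z.of_nat n)). lia.
Qed.

Lemma rotate_index_lt n r i : i < n -> rotate_index n r i < n.
Proof.
  intro H. pose proof (rotate_index_Z n r i H).
  pose proof (Z.mod_pos_bound (Z.of_nat i + r) (Z.of_nat n)). lia.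
Qed.

Lemma rotate_index_inv n r r' i : (r + r' = 0)%Z -> i < n ->
  rotate_index n r' (rotate_index n r i) = i.
Proof.
  intros H Hi. unfold rotate_index at 1. rewrite rotate_index_Z by auto.
  rewrite Zplus_mod_idemp_l. replace (Z.of_nat i + r + r')%Z with (Z.of_nat i) by lia.
  rewrite Z.mod_small by lia. lia.
Qed.

Lemma shift_phase_inv n r r' m w : (r + r' = 0)%Z -> shift_phase n r' m (shift_phase n r m w) = w.
Proof.
  intro H. unfold shift_phase. destruct (m <? n); auto.
  apply functional_extensionality; intro j. destruct (j =? n); lia.
Qed.

Lemma shift_phase_inj n r m w1 w2 : shift_phase n r m w1 = shift_phase n r m w2 -> w1 = w2.
Proof.
  intro H. rewrite <- (shift_phase_inv n r (- r) m w1), H by lia. apply shift_phase_inv. lia.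
Qed.

Lemma rot_is_key n r x : is_key (rot n r x) <-> is_key x.
Proof. destruct x; cbn; tauto. Qed.

Lemma rot_is_pt n r x : is_pt (rot n r x) <-> is_pt x.
Proof. destruct x; cbn; tauto. Qed.

Lemma rot_level n r x : level (rot n r x) = level x.
Proof.
  destruct x as [|i d c w]; cbn; auto. destruct (Nat.eqb_spec (i + S d) n); [|lia].
  pose proof (rotate_index_lt n r i). lia.
Qed.

Lemma rot_copy n r x : copy (rot n r x) = copy x.
Proof. destruct x; reflexivity. Qed.

Lemma rot_phase n r x : phase (rot n r x) = shift_phase n r (level x) (phase x).
Proof. destruct x; reflexivity. Qed.

Lemma rot_index n r x : is_pt x ->
  index (rot n r x) = if level x =? n then rotate_index n r (index x) else index x.
Proof. destruct x as [|i d c w]; cbn; intros; [contradiction|]. destruct (i + S d =? n); auto. Qed.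

Lemma rot_inv n r r' x : (r + r' = 0)%Z -> rot n r' (rot n r x) = x.
Proof.
  intro H. destruct (key_or_pt x) as [[Hk _]|[Hp _]].
  - apply key_ext; rewrite ?rot_is_key, ?rot_level, ?rot_copy, ?rot_phase, ?rot_level; auto.
    apply shift_phase_inv; auto.
  - apply pt_ext; rewrite ?rot_is_pt, ?rot_level, ?rot_copy, ?rot_phase, ?rot_level; auto.
    + rewrite (rot_index n r' (rot n r x)) by (apply rot_is_pt; auto).
      rewrite rot_level, rot_index by auto.
      destruct (Nat.eqb_spec (level x) n); auto.
      apply rotate_index_inv; auto. pose proof (index_lt_level x Hp). lia.
    + apply shift_phase_inv; auto.
Qed.

Lemma rot_fix n r y : (is_key y /\ n <= level y) \/ (is_pt y /\ n < level y) -> rot n r y = y.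
Proof.
  intros H. assert (Hsh : shift_phase n r (level y) (phase y) = phase y).
  { unfold shift_phase. destruct (Nat.ltb_spec (level y) n); auto. destruct H as [[]|[]]; lia. }
  destruct (key_or_pt y) as [[Hk _]|[Hp Hnk]].
  - apply key_ext; rewrite ?rot_is_key, ?rot_level, ?rot_copy, ?rot_phase; auto.
  - apply pt_ext; rewrite ?rot_is_pt, ?rot_level, ?rot_copy, ?rot_phase, ?rot_index; auto.
    destruct (Nat.eqb_spec (level y) n); auto. destruct H as [[]|[]]; [contradiction|lia].
Qed.

Lemma rot_move t x u : InBlock t x -> InBlock t u ->
  rot (level t) (Z.of_nat (index u) - Z.of_nat (index x)) x = u.
Proof.
  intros (Hk & Hx & H1 & H2 & H3) (_ & Hu & H1' & H2' & H3').
  pose proof (index_lt_level x Hx). pose proof (index_lt_level u Hu).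
  apply pt_ext; rewrite ?rot_is_pt, ?rot_level, ?rot_copy, ?rot_phase, ?rot_index; auto;
    try congruence.
  - rewrite <- H1, Nat.eqb_refl. unfold rotate_index.
    replace (Z.of_nat (index x) + (Z.of_nat (index u) - Z.of_nat (index x)))%Z
      with (Z.of_nat (index u)) by lia.
    rewrite Z.mod_small by lia. lia.
  - rewrite <- H1. unfold shift_phase. rewrite Nat.ltb_irrefl. congruence.
Qed.

Lemma origin_rot n r m y : (is_key y /\ level y < m) \/ (is_pt y /\ level y <= m) -> 0 < m ->
  if m =? n then ((origin m (rot n r y)) mod Z.of_nat m = (origin m y + r) mod Z.of_nat m)%Z
  else origin m (rot n r y) = origin m y.
Proof.
  intros Hr Hm.
  destruct (key_or_pt y) as [[Hk Hnp]|[Hp Hnk]].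
  - destruct Hr as [[_ Hr]|[Hr _]]; [|contradiction].
    rewrite !origin_key by (try apply rot_is_key; auto). rewrite rot_phase.
    unfold shift_phase. destruct (Nat.eqb_spec m n), (Nat.ltb_spec (level y) n); subst; try lia;
      rewrite ?Nat.eqb_refl; auto.
    destruct (Nat.eqb_spec m n); subst; try lia; auto.
  - destruct Hr as [[Hr _]|[_ Hr]]; [contradiction|].
    rewrite !origin_pt by (try apply rot_is_pt; auto).
    rewrite rot_phase, rot_level, rot_index by auto.
    pose proof (index_lt_level y Hp).
    destruct (Nat.eqb_spec (level y) n).
    + subst n. unfold shift_phase. rewrite Nat.ltb_irrefl.
      destruct (Nat.eqb_spec (level y) m), (Nat.eqb_spec m (level y)); try lia;
        subst m; rewrite rotate_index_Z by lia; rewrite Zmod_mod; auto.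
    + destruct (Nat.eqb_spec (level y) m).
      * subst m. destruct (Nat.eqb_spec (level y) n); [lia|]. auto.
      * unfold shift_phase. destruct (Nat.eqb_spec m n), (Nat.ltb_spec (level y) n); subst; try lia;
          rewrite ?Nat.eqb_refl; auto.
        destruct (Nat.eqb_spec m n); subst; try lia; auto.
Qed.

Lemma offset_rot n r u y : is_pt u -> Below u y ->
  offset (level u) (origin (level u) (rot n r y)) (index (rot n r u)) =
  offset (level u) (origin (level u) y) (index u).
Proof.
  intros Hp Hr. pose proof (index_lt_level u Hp) as Hm.
  pose proof (origin_rot n r (level u) y Hr ltac:(lia)) as Ho.
  rewrite rot_index by auto. unfold offset.
  destruct (Nat.eqb_spec (level u) n).
  - subst n. rewrite rotate_index_Z by lia. rewrite Zminus_mod_idemp_l.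
    rewrite <- (Zminus_mod_idemp_r (Z.of_nat (index u) + r)), Ho, Zminus_mod_idemp_r.
    f_equal. lia.
  - rewrite Ho. auto.
Qed.

Lemma rot_SameBlock n r k x : SameBlock (rot n r k) (rot n r x) <-> SameBlock k x.
Proof.
  unfold SameBlock. rewrite !rot_is_pt, !rot_level, !rot_copy, !rot_phase.
  split; intros (Hx & Hl & Hc & Hph); repeat split; auto.
  - rewrite Hl in Hph. eapply shift_phase_inj; eauto.
  - rewrite Hl, Hph; auto.
Qed.

Lemma rot_InBlock n r k x : InBlock (rot n r k) (rot n r x) <-> InBlock k x.
Proof. unfold InBlock. rewrite rot_is_key, rot_SameBlock. tauto. Qed.

Lemma rot_Below n r k x : Below (rot n r k) (rot n r x) <-> Below k x.
Proof. unfold Below. rewrite !rot_is_key, !rot_is_pt, !rot_level. tauto. Qed.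

Lemma rot_Ord n r y u v : Ord (rot n r y) (rot n r u) (rot n r v) <-> Ord y u v.
Proof.
  assert (Hoff : forall z, SameBlock u z -> Below u y ->
    offset (level u) (origin (level u) (rot n r y)) (index (rot n r z)) =
    offset (level u) (origin (level u) y) (index z)).
  { intros z (Hz & Hl & _) Hy. rewrite Hl. apply offset_rot; auto.
    unfold Below in *. rewrite <- Hl. auto. }
  unfold Ord. rewrite rot_SameBlock, rot_is_pt, rot_Below, rot_level.
  split; intros (Huv & Hu & Hy & Ho); refine (conj Huv (conj Hu (conj Hy _)));
    assert (Huu : SameBlock u u) by (repeat split; auto);
    rewrite (Hoff u), (Hoff v) in *; auto.
Qed.

Lemma rot_auto n r : is_auto Mkb (rot n r).
Proof.
  apply is_auto_kb.
  - exists (rot n (- r)). intro x; split; apply rot_inv; lia.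
  - apply rot_is_key.
  - apply rot_InBlock.
  - apply rot_SameBlock.
  - apply rot_Below.
  - apply rot_Ord.
Qed.

Definition set_copy (x : elt) (c : nat) : elt :=
  match x with EKey n _ w => EKey n c w | EPt i d _ w => EPt i d c w end.

Definition copy_swap (n : nat) (w : nat -> Z) (c0 c1 : nat) (x : elt) : elt :=
  if excluded_middle_informative (level x = n /\ phase x = w)
  then set_copy x (transp c0 c1 (copy x)) else x.

Section CopySwap.
Variables (n : nat) (w : nat -> Z) (c0 c1 : nat).
Notation sw := (copy_swap n w c0 c1).

Lemma copy_swap_cases x :
  (level x = n /\ phase x = w /\ sw x = set_copy x (transp c0 c1 (copy x))) \/
  (~ (level x = n /\ phase x = w) /\ sw x = x).
Proof. unfold copy_swap. destruct excluded_middle_informative; tauto. Qed.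

Lemma copy_swap_is_key x : is_key (sw x) <-> is_key x.
Proof. destruct (copy_swap_cases x) as [(_ & _ & ->)|(_ & ->)]; destruct x; cbn; tauto. Qed.

Lemma copy_swap_is_pt x : is_pt (sw x) <-> is_pt x.
Proof. destruct (copy_swap_cases x) as [(_ & _ & ->)|(_ & ->)]; destruct x; cbn; tauto. Qed.

Lemma copy_swap_level x : level (sw x) = level x.
Proof. destruct (copy_swap_cases x) as [(_ & _ & ->)|(_ & ->)]; destruct x; reflexivity. Qed.

Lemma copy_swap_phase x : phase (sw x) = phase x.
Proof. destruct (copy_swap_cases x) as [(_ & _ & ->)|(_ & ->)]; destruct x; reflexivity. Qed.

Lemma copy_swap_index x : index (sw x) = index x.
Proof. destruct (copy_swap_cases x) as [(_ & _ & ->)|(_ & ->)]; destruct x; reflexivity. Qed.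

Lemma copy_swap_copy x : copy (sw x) = if excluded_middle_informative (level x = n /\ phase x = w)
  then transp c0 c1 (copy x) else copy x.
Proof. unfold copy_swap. destruct excluded_middle_informative; [destruct x|]; reflexivity. Qed.

Lemma copy_swap_origin m y : origin m (sw y) = origin m y.
Proof.
  destruct (key_or_pt y) as [[Hk _]|[Hp _]].
  - rewrite !origin_key, copy_swap_phase; auto. apply copy_swap_is_key; auto.
  - rewrite !origin_pt, copy_swap_phase, copy_swap_level, copy_swap_index; auto.
    apply copy_swap_is_pt; auto.
Qed.

Lemma copy_swap_invol x : sw (sw x) = x.
Proof.
  destruct (key_or_pt x) as [[Hk _]|[Hp _]];
    [apply key_ext|apply pt_ext]; rewrite ?copy_swap_is_key, ?copy_swap_is_pt,
    ?copy_swap_level, ?copy_swap_phase, ?copy_swap_index; auto;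
    rewrite !copy_swap_copy, copy_swap_level, copy_swap_phase;
    destruct excluded_middle_informative; auto; apply transp_invol.
Qed.

Lemma copy_swap_SameBlock k x : SameBlock (sw k) (sw x) <-> SameBlock k x.
Proof.
  unfold SameBlock. rewrite copy_swap_is_pt, !copy_swap_level, !copy_swap_phase, !copy_swap_copy.
  split; intros (Hx & Hl & Hc & Hph); repeat split; auto; rewrite Hl, Hph in *;
    destruct excluded_middle_informative; auto; eapply transp_inj; eauto.
Qed.

Lemma copy_swap_auto : is_auto Mkb sw.
Proof.
  apply is_auto_kb.
  - exists sw. intro; split; apply copy_swap_invol.
  - apply copy_swap_is_key.
  - intros k x. unfold InBlock. rewrite copy_swap_is_key, copy_swap_SameBlock. tauto.
  - apply copy_swap_SameBlock.
  - intros k x. unfold Below. rewrite !copy_swap_is_key, !copy_swap_is_pt, !copy_swap_level. tauto.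
  - intros y u v. unfold Ord, Below.
    rewrite copy_swap_SameBlock, !copy_swap_is_key, !copy_swap_is_pt, !copy_swap_level,
      !copy_swap_index, !copy_swap_origin.
    tauto.
Qed.

Lemma copy_swap_fix x : ~ (level x = n /\ phase x = w /\ (copy x = c0 \/ copy x = c1)) -> sw x = x.
Proof.
  intro H. destruct (copy_swap_cases x) as [(Hl & Hph & ->)|(_ & ->)]; auto.
  rewrite transp_other by (intro; apply H; auto). destruct x; reflexivity.
Qed.

End CopySwap.

Definition args1 {X} (a : X) : Fin.t 1 -> X := fun _ => a.
Definition args2 {X} (a b : X) : Fin.t 2 -> X :=
  fun i => match proj1_sig (Fin.to_nat i) with 0 => a | _ => b end.
Definition args3 {X} (a b c : X) : Fin.t 3 -> X :=
  fun i => match proj1_sig (Fin.to_nat i) with 0 => a | 1 => b | _ => c end.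

Definition aKey (x : nat) : formula L_kb := @fRel L_kb rKey (args1 (tvar x)).
Definition aInBlock (x y : nat) : formula L_kb := @fRel L_kb rInBlock (args2 (tvar x) (tvar y)).
Definition aSameBlock (x y : nat) : formula L_kb := @fRel L_kb rSameBlock (args2 (tvar x) (tvar y)).
Definition aBelow (x y : nat) : formula L_kb := @fRel L_kb rBelow (args2 (tvar x) (tvar y)).
Definition aOrd (x y z : nat) : formula L_kb := @fRel L_kb rOrd (args3 (tvar x) (tvar y) (tvar z)).

Section AtomicFormulas.
Variable M : structure L_kb.

Definition RKey (a : M) : Prop := @rel_int L_kb M rKey (args1 a).
Definition RInBlock (a b : M) : Prop := @rel_int L_kb M rInBlock (args2 a b).
Definition RSameBlock (a b : M) : Prop := @rel_int L_kb M rSameBlock (args2 a b).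
Definition RBelow (a b : M) : Prop := @rel_int L_kb M rBelow (args2 a b).
Definition ROrd (a b c : M) : Prop := @rel_int L_kb M rOrd (args3 a b c).

Lemma eval_args2 e x y : (fun i => eval M e (args2 (tvar x) (tvar y) i)) = args2 (e x) (e y).
Proof.
  apply functional_extensionality; intro i. unfold args2.
  destruct (proj1_sig (Fin.to_nat i)); reflexivity.
Qed.

Lemma eval_args3 e x y z :
  (fun i => eval M e (args3 (tvar x) (tvar y) (tvar z) i)) = args3 (e x) (e y) (e z).
Proof.
  apply functional_extensionality; intro i. unfold args3.
  destruct (proj1_sig (Fin.to_nat i)) as [|[|]]; reflexivity.
Qed.

Lemma sat_aKey e x : sat M e (aKey x) <-> RKey (e x).
Proof. reflexivity. Qed.

Lemma sat_aInBlock e x y : sat M e (aInBlock x y) <-> RInBlock (e x) (e y).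
Proof. unfold aInBlock, RInBlock. cbn. rewrite eval_args2. tauto. Qed.

Lemma sat_aSameBlock e x y : sat M e (aSameBlock x y) <-> RSameBlock (e x) (e y).
Proof. unfold aSameBlock, RSameBlock. cbn. rewrite eval_args2. tauto. Qed.

Lemma sat_aBelow e x y : sat M e (aBelow x y) <-> RBelow (e x) (e y).
Proof. unfold aBelow, RBelow. cbn. rewrite eval_args2. tauto. Qed.

Lemma sat_aOrd e x y z : sat M e (aOrd x y z) <-> ROrd (e x) (e y) (e z).
Proof. unfold aOrd, ROrd. cbn. rewrite eval_args3. tauto. Qed.

End AtomicFormulas.

Ltac sat_kb_simpl := unfold fNot in *; cbn [sat eval] in *;
  rewrite ?sat_or, ?sat_aKey, ?sat_aInBlock, ?sat_aSameBlock, ?sat_aBelow, ?sat_aOrd in *.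

Ltac kb_unfold := cbv [RKey RInBlock RSameBlock RBelow ROrd args1 args2 args3] in *;
  cbn [rel_int Mkb interp_kb Fin.to_nat proj1_sig] in *.

Definition block_list (k : elt) : list elt :=
  map (fun i => EPt i (level k - S i) (copy k) (phase k)) (seq 0 (level k)).

Lemma block_list_length k : length (block_list k) = level k.
Proof. unfold block_list. rewrite length_map, length_seq. auto. Qed.

Lemma block_list_NoDup k : NoDup (block_list k).
Proof.
  apply NoDup_map_NoDup_ForallPairs; [|apply seq_NoDup]. intros i j _ _ H. inversion H; auto.
Qed.

Lemma in_block_list k z : InBlock k z -> In z (block_list k).
Proof.
  intros (Hk & Hz & H1 & H2 & H3). destruct z as [|i d c w]; [contradiction|].
  cbn in H1, H2, H3. unfold block_list. rewrite H1, H2, H3.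
  apply in_map_iff. exists i. split; [f_equal; lia|apply in_seq; lia].
Qed.

Lemma block_list_InBlock k z : is_key k -> In z (block_list k) -> InBlock k z.
Proof.
  intros Hk Hin. unfold block_list in Hin. apply in_map_iff in Hin.
  destruct Hin as [i [<- Hin]]. apply in_seq in Hin. repeat split; cbn; auto. lia.
Qed.

Definition ax_key_unique : formula L_kb :=
  fImp (aInBlock 0 2) (fImp (aInBlock 1 2) (fEq (tvar 0) (tvar 1))).
Definition ax_key_is_key : formula L_kb := fImp (aInBlock 0 1) (aKey 0).
Definition ax_in_block_same : formula L_kb := fImp (aInBlock 0 1) (aSameBlock 0 1).
Definition ax_block_same_block : formula L_kb :=
  fImp (aInBlock 0 1) (fImp (aInBlock 0 2) (aSameBlock 1 2)).
Definition ax_block_below_self : formula L_kb := fImp (aInBlock 0 1) (aBelow 1 1).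
Definition ax_ord_irrefl : formula L_kb := fNot (aOrd 0 1 1).
Definition ax_ord_trans : formula L_kb := fImp (aOrd 0 1 2) (fImp (aOrd 0 2 3) (aOrd 0 1 3)).
Definition ax_ord_total : formula L_kb :=
  fImp (aSameBlock 0 1) (fImp (aSameBlock 0 2) (fImp (aBelow 0 3)
    (fImp (fNot (fEq (tvar 1) (tvar 2))) (fOr (aOrd 3 1 2) (aOrd 3 2 1))))).
Definition ax_incomparable_keys_size (s : nat) : formula L_kb :=
  fImp (aKey 0) (fImp (aKey 1) (fImp (fNot (aBelow 0 1)) (fImp (fNot (aBelow 1 0))
    (fImp (fAtMost s (aInBlock 1 0)) (fAtMost s (aInBlock 2 0)))))).

Ltac valid_kb ax := intro e; unfold ax; sat_kb_simpl; kb_unfold.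

Lemma valid_key_unique e : sat Mkb e ax_key_unique.
Proof.
  revert e; valid_kb ax_key_unique.
  intros (H1 & _ & H3 & H4 & H5) (H1' & _ & H3' & H4' & H5'). apply key_ext; auto; congruence.
Qed.

Lemma valid_key_is_key e : sat Mkb e ax_key_is_key.
Proof. revert e; valid_kb ax_key_is_key. intros []; auto. Qed.

Lemma valid_in_block_same e : sat Mkb e ax_in_block_same.
Proof. revert e; valid_kb ax_in_block_same. intros []; auto. Qed.

Lemma valid_block_same_block e : sat Mkb e ax_block_same_block.
Proof.
  revert e; valid_kb ax_block_same_block.
  intros (_ & H2 & H3 & H4 & H5) (_ & H2' & H3' & H4' & H5'). repeat split; auto; congruence.
Qed.

Lemma valid_block_below_self e : sat Mkb e ax_block_below_self.
Proof. revert e; valid_kb ax_block_below_self. intros (_ & H & _). right; auto. Qed.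

Lemma valid_ord_irrefl e : sat Mkb e ax_ord_irrefl.
Proof. revert e; valid_kb ax_ord_irrefl. intros (_ & _ & _ & H). lia. Qed.

Lemma valid_ord_trans e : sat Mkb e ax_ord_trans.
Proof.
  revert e; valid_kb ax_ord_trans.
  intros ((Hv & Hl & Hc & Hph) & Hu & Hy & Ho) ((Hw & Hl' & Hc' & Hph') & _ & _ & Ho').
  rewrite <- Hl in Ho'. repeat split; auto; try congruence. lia.
Qed.

Lemma valid_ord_total e : sat Mkb e ax_ord_total.
Proof.
  revert e; valid_kb ax_ord_total.
  set (t := e 0); set (u := e 1); set (v := e 2); set (y := e 3).
  intros (Hu & Hu1 & Hu2 & Hu3) (Hv & Hv1 & Hv2 & Hv3) Hy Hne.
  assert (Huv : SameBlock u v) by (repeat split; auto; congruence).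
  assert (Hvu : SameBlock v u) by (repeat split; auto; congruence).
  assert (Hyu : Below u y) by (unfold Below in *; rewrite <- Hu1; auto).
  assert (Hyv : Below v y) by (unfold Below in *; rewrite <- Hv1; auto).
  pose proof (index_lt_level u Hu). pose proof (index_lt_level v Hv).
  assert (index u <> index v) by (intro; apply Hne, pt_ext; auto; congruence).
  set (o := origin (level u) y).
  assert (offset (level u) o (index u) <> offset (level u) o (index v))
    by (intro Ho; apply offset_inj in Ho; lia).
  destruct (Z.lt_total (offset (level u) o (index u)) (offset (level u) o (index v)))
    as [Hlt|[Heq|Hgt]]; [left|contradiction|right].
  - exact (conj Huv (conj Hu (conj Hyu Hlt))).
  - refine (conj Hvu (conj Hv (conj Hyv _))). replace (level v) with (level u) by congruence.
    exact Hgt.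
Qed.

Lemma valid_incomparable_keys_size s e : sat Mkb e (ax_incomparable_keys_size s).
Proof.
  revert e; valid_kb ax_incomparable_keys_size. rewrite !sat_fAtMost.
  intros Hk1 Hk2 Hn1 Hn2 [l [Hl Hc]].
  assert (Hlev : level (e 1) = level (e 0)).
  { destruct (Nat.lt_total (level (e 0)) (level (e 1))) as [H|[H|H]]; auto;
      exfalso; [apply Hn2|apply Hn1]; left; auto. }
  assert (level (e 0) <= s).
  { rewrite <- Hl, <- block_list_length. apply NoDup_incl_length; [apply block_list_NoDup|].
    intros z Hz. apply Hc, (sat_aInBlock Mkb (scons z e) 1 0), block_list_InBlock; auto. }
  assert (Hlen : length (block_list (e 1)) <= s) by (rewrite block_list_length; lia).
  destruct (pad_list (e 0) _ _ s Hlen (in_block_list (e 1))) as [l' [Hl' Hc']].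
  exists l'. split; [exact Hl'|exact Hc'].
Qed.

Definition Linked (M : structure L_kb) (x y : M) : Prop :=
  x = y \/ RInBlock M y x \/ RInBlock M x y \/ exists z, RInBlock M z y /\ RInBlock M z x.

Definition fLinked_to (j : nat) : formula L_kb :=
  fOr (fEq (tvar 0) (tvar (S j))) (fOr (aInBlock (S j) 0) (fOr (aInBlock 0 (S j))
    (fEx (fAnd (aInBlock 0 (S (S j))) (aInBlock 0 1))))).

Fixpoint fLinked (k : nat) : formula L_kb :=
  match k with 0 => fFalse | S j => fOr (fLinked j) (fLinked_to j) end.

Lemma sat_fLinked M k : forall e,
  sat M e (fLinked k) <-> exists j, j < k /\ Linked M (e 0) (e (S j)).
Proof.
  induction k as [|k IH]; intros e; cbn [fLinked].
  - cbn. split; [tauto|]. intros [j [Hj _]]; lia.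
  - rewrite sat_or, IH. unfold fLinked_to. rewrite !sat_or, sat_ex, !sat_aInBlock.
    setoid_rewrite sat_and. setoid_rewrite sat_aInBlock. cbn. unfold Linked. split.
    + intros [[j [Hj H]]|H]; [exists j; split; [lia|auto]|exists k; split; [lia|tauto]].
    + intros [j [Hj H]]. destruct (Nat.eq_dec j k) as [->|]; [right; tauto|].
      left. exists j. split; [lia|auto].
Qed.

Fixpoint fNoneBelow (k h : nat) : formula L_kb :=
  match k with
  | 0 => fImp fFalse fFalse
  | S j => fAnd (fNoneBelow j h) (fNot (aBelow (S h) (S j)))
  end.

Lemma sat_fNoneBelow M k : forall h e,
  sat M e (fNoneBelow k h) <-> forall j, j < k -> ~ RBelow M (e (S h)) (e (S j)).
Proof.
  induction k as [|k IH]; intros h e; cbn [fNoneBelow].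
  - cbn. split; auto. intros; lia.
  - rewrite sat_and, IH. unfold fNot. cbn [sat]. rewrite sat_aBelow. split.
    + intros [H1 H2] j Hj. destruct (Nat.eq_dec j k) as [->|]; [auto|apply H1; lia].
    + intros H; split; [intros j Hj|]; apply H; lia.
Qed.

(* An element algebraic over [a] is linked to some [a_j]: otherwise copy swaps fixing [a] move it
   to infinitely many copies. *)
Definition ax_linked (phi : formula L_kb) (k m : nat) : formula L_kb :=
  fImp phi (fImp (fNot (fLinked k)) (fNot (frename S (fAtMost m phi)))).

Lemma sat_ax_linked M phi k m e : sat M e (ax_linked phi k m) <->
  (sat M e phi -> ~ (exists j, j < k /\ Linked M (e 0) (e (S j))) ->
   ~ (exists l, length l = m /\ forall z, sat M (scons z (fun n => e (S n))) phi -> In z l)).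
Proof. unfold ax_linked, fNot. cbn [sat]. rewrite sat_fLinked, sat_rename, sat_fAtMost. tauto. Qed.

(* If no parameter lies below the key [a_h], the rotations of its block fix all parameters. *)
Definition ax_rot_block (phi : formula L_kb) (k h : nat) : formula L_kb :=
  fImp (aKey (S h)) (fImp (fNoneBelow k h) (fImp (aInBlock (S h) 0) (fImp phi
    (fAll (fImp (aInBlock (S (S h)) 0) (frename (up_ren S) phi)))))).

Lemma sat_ax_rot_block M phi k h e : sat M e (ax_rot_block phi k h) <->
  (RKey M (e (S h)) -> (forall j, j < k -> ~ RBelow M (e (S h)) (e (S j))) ->
   RInBlock M (e (S h)) (e 0) -> sat M e phi ->
   forall u, RInBlock M (e (S h)) u -> sat M (scons u (fun n => e (S n))) phi).
Proof.
  unfold ax_rot_block. cbn [sat]. rewrite sat_aKey, sat_fNoneBelow, sat_aInBlock.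
  setoid_rewrite sat_aInBlock. setoid_rewrite sat_rename.
  assert (Heq : forall u : M, (fun n => scons u e (up_ren S n)) = scons u (fun n => e (S n)))
    by (intro u; apply functional_extensionality; intros [|n]; reflexivity).
  setoid_rewrite Heq. tauto.
Qed.

Lemma Linked_same_block x y : level x = level y -> copy x = copy y -> phase x = phase y ->
  Linked Mkb x y.
Proof.
  intros Hl Hc Hph. unfold Linked. kb_unfold.
  destruct (key_or_pt x) as [[Hx _]|[Hx _]], (key_or_pt y) as [[Hy _]|[Hy _]].
  - left. apply key_ext; auto.
  - right; right; left. repeat split; auto.
  - right; left. repeat split; auto.
  - right; right; right. exists (EKey (level x) (copy x) (phase x)). kb_unfold.
    repeat split; cbn; auto.
Qed.

Lemma valid_linked phi k m e : bound (S k) phi -> sat Mkb e (ax_linked phi k m).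
Proof.
  intros Hb. rewrite sat_ax_linked. intros Hs Hunl [l [Hl Hc]].
  set (b := e 0) in *. set (a := fun n => e (S n)) in *.
  replace e with (scons b a) in Hs by (apply functional_extensionality; intros [|n]; reflexivity).
  destruct (nat_fun_bounded (fun j => copy (a j)) k) as [c Hca].
  set (fresh := S (copy b + c)).
  set (sw t := copy_swap (level b) (phase b) (copy b) (fresh + t)).
  set (cs := map (fun t => sw t b) (seq 0 (S m))).
  enough (length cs <= length l) by (unfold cs in *; rewrite length_map, length_seq in *; lia).
  apply (conjugates_le_solutions Mkb phi k a b cs Hb Hs); [| |exact Hc].
  - apply NoDup_map_NoDup_ForallPairs; [|apply seq_NoDup]. intros t1 t2 _ _ Ht.
    apply (f_equal copy) in Ht. unfold sw in Ht. rewrite !copy_swap_copy in Ht.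
    destruct excluded_middle_informative as [_|[]]; [|auto]. rewrite !transp_l in Ht. lia.
  - intros c' Hin. apply in_map_iff in Hin. destruct Hin as [t [<- _]].
    exists (sw t). split; [apply copy_swap_auto|split; auto].
    intros j Hj. apply copy_swap_fix. intros (H1 & H2 & [H3|H3]).
    + apply Hunl. exists j. split; auto. apply Linked_same_block; auto.
    + specialize (Hca j Hj). cbn in Hca. lia.
Qed.

Lemma valid_rot_block phi k h e : bound (S k) phi -> sat Mkb e (ax_rot_block phi k h).
Proof.
  intros Hb. rewrite sat_ax_rot_block. kb_unfold. intros Hk Hnb HB Hs u Hu.
  set (a := fun n => e (S n)) in *.
  replace e with (scons (e 0) a) in Hs
    by (apply functional_extensionality; intros [|n]; reflexivity).
  rewrite <- (rot_move (e (S h)) (e 0) u HB Hu).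
  apply (sat_auto_image Mkb _ phi k a (e 0) (rot_auto _ _) Hb); auto.
  intros j Hj. apply rot_fix. specialize (Hnb j Hj). unfold Below in Hnb.
  destruct (key_or_pt (a j)) as [[Hk' _]|[Hp' _]]; [left|right]; split; auto.
  - apply Nat.nlt_ge. intro. apply Hnb. left. auto.
  - apply Nat.nle_gt. intro. apply Hnb. right. auto.
Qed.

Lemma acl_degree_unbounded n : exists (A : Mkb -> Prop) b, acl Mkb A b /\ ~ acl_n Mkb A n b.
Proof.
  set (k := EKey (S n) 0 (fun _ => 0%Z)). set (b := EPt 0 n 0 (fun _ => 0%Z)).
  exists (fun y => y = k), b.
  assert (Hkb : InBlock k b) by (repeat split; cbn; auto).
  split.
  - exists (S n). apply (acl_n_intro Mkb _ (aInBlock 1 0) (fun _ => k) _ (block_list k)); auto.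
    + rewrite block_list_length. cbn; lia.
    + intros c Hc. apply in_block_list. exact Hc.
  - intros [p [kk [a [Hp [HA [Hs [l [Hl Hc]]]]]]]].
    enough (length (block_list k) <= length l) by (rewrite block_list_length in *; cbn in *; lia).
    apply (conjugates_le_solutions Mkb p kk a _ (block_list k) Hp Hs (block_list_NoDup k));
      [|exact Hc].
    intros c Hin. apply block_list_InBlock in Hin; [|exact I].
    exists (rot (level k) (Z.of_nat (index c) - Z.of_nat (index b))).
    split; [apply rot_auto|split; [|apply rot_move; auto]].
    intros i Hi. rewrite (HA i Hi). apply rot_fix. left. cbn; split; auto.
Qed.

Definition env_of_list {X} (l : list X) (d : X) : nat -> X := fun n => nth n l d.

Section ModelsOfTh.
Variables (M : structure L_kb) (HM : is_model (Th Mkb) M).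

Ltac from_axiom valid ax l :=
  let H := fresh "H" in
  lazymatch l with
  | cons ?x _ => pose proof (Th_transfer Mkb _ valid M HM (env_of_list l x)) as H
  end;
  unfold ax in H; sat_kb_simpl; exact H.

Lemma key_unique z z' p : RInBlock M z p -> RInBlock M z' p -> z = z'.
Proof. from_axiom valid_key_unique ax_key_unique [z; z'; p]. Qed.

Lemma key_is_key k x : RInBlock M k x -> RKey M k.
Proof. from_axiom valid_key_is_key ax_key_is_key [k; x]. Qed.

Lemma in_block_same k x : RInBlock M k x -> RSameBlock M k x.
Proof. from_axiom valid_in_block_same ax_in_block_same [k; x]. Qed.

Lemma block_same_block z p x : RInBlock M z p -> RInBlock M z x -> RSameBlock M p x.
Proof. from_axiom valid_block_same_block ax_block_same_block [z; p; x]. Qed.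

Lemma block_below_self z p : RInBlock M z p -> RBelow M p p.
Proof. from_axiom valid_block_below_self ax_block_below_self [z; p]. Qed.

Lemma ord_irrefl y u : ~ ROrd M y u u.
Proof. from_axiom valid_ord_irrefl ax_ord_irrefl [y; u]. Qed.

Lemma ord_trans y u v w : ROrd M y u v -> ROrd M y v w -> ROrd M y u w.
Proof. from_axiom valid_ord_trans ax_ord_trans [y; u; v; w]. Qed.

Lemma ord_total t u v y : RSameBlock M t u -> RSameBlock M t v -> RBelow M t y -> u <> v ->
  ROrd M y u v \/ ROrd M y v u.
Proof. from_axiom valid_ord_total ax_ord_total [t; u; v; y]. Qed.

Lemma incomparable_keys_size s k k' : RKey M k -> RKey M k' ->
  ~ RBelow M k k' -> ~ RBelow M k' k ->
  (exists l, length l = s /\ forall z, RInBlock M k z -> In z l) ->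
  (exists l, length l = s /\ forall z, RInBlock M k' z -> In z l).
Proof.
  pose proof (Th_transfer Mkb _ (valid_incomparable_keys_size s) M HM (env_of_list [k; k'] k))
    as H.
  unfold ax_incomparable_keys_size in H. sat_kb_simpl. rewrite !sat_fAtMost in H.
  setoid_rewrite sat_aInBlock in H. exact H.
Qed.

Lemma linked_of_acl phi k m (e : nat -> M) : bound (S k) phi -> sat M e phi ->
  (exists l, length l = m /\ forall z, sat M (scons z (fun n => e (S n))) phi -> In z l) ->
  exists j, j < k /\ Linked M (e 0) (e (S j)).
Proof.
  intros Hb Hs Hl.
  pose proof (Th_transfer Mkb _ (fun e0 => valid_linked phi k m e0 Hb) M HM e) as H.
  rewrite sat_ax_linked in H. apply NNPP. intro Hn. exact (H Hs Hn Hl).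
Qed.

Lemma rot_block_closed phi k h (e : nat -> M) : bound (S k) phi ->
  RKey M (e (S h)) -> (forall j, j < k -> ~ RBelow M (e (S h)) (e (S j))) ->
  RInBlock M (e (S h)) (e 0) -> sat M e phi ->
  forall u, RInBlock M (e (S h)) u -> sat M (scons u (fun n => e (S n))) phi.
Proof.
  intros Hb. rewrite <- sat_ax_rot_block.
  exact (Th_transfer Mkb _ (fun e0 => valid_rot_block phi k h e0 Hb) M HM e).
Qed.

(* The points of a block are linearly ordered by [Ord y] once [y] lies below the block, so each
   of them is definable from [y] and the block as soon as it is algebraic. *)
Lemma acl1_of_below (A : M -> Prop) phi k (a : nat -> M) l t y b :
  bound (S k) phi -> (forall i, i < k -> A (a i)) -> A t -> A y ->
  RBelow M t y -> RSameBlock M t b ->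
  sat M (scons b a) phi -> (forall c, sat M (scons c a) phi -> In c l) -> acl_n M A 1 b.
Proof.
  intros Hb HA Ht Hy Hty Htb Hs Hc.
  set (e' := fun j => if j <? k then a j else if j =? k then t else y).
  assert (HA' : forall j, A (e' j)).
  { intro j; unfold e'. destruct (Nat.ltb_spec j k); auto. destruct (j =? k); auto. }
  assert (Hag : forall c, sat M (scons c e') phi <-> sat M (scons c a) phi).
  { intro c. apply (sat_agree M phi (S k)); auto. intros [|i] Hi; cbn; auto.
    unfold e'. destruct (Nat.ltb_spec i k); auto; lia. }
  assert (Het : e' k = t) by (unfold e'; rewrite Nat.ltb_irrefl, Nat.eqb_refl; auto).
  assert (Hey : e' (S k) = y).
  { unfold e'. destruct (Nat.ltb_spec (S k) k); try lia.
    destruct (Nat.eqb_spec (S k) k); try lia; auto. }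
  set (chi := fAnd phi (aSameBlock (S k) 0)).
  set (O := aOrd (S (S (S k))) 0 1).
  assert (Hchi : forall c, sat M (scons c e') chi <-> sat M (scons c a) phi /\ RSameBlock M t c).
  { intro c. unfold chi. rewrite sat_and, sat_aSameBlock, Hag. cbn. rewrite Het. tauto. }
  assert (HO : forall u v, sat M (scons u (scons v e')) O <-> ROrd M y u v).
  { intros u v. unfold O. rewrite sat_aOrd. cbn. rewrite Hey. tauto. }
  destruct (definable_in_finite_order M O (length l) chi e' l) with (b := b)
    as [psi [Hpsi Huniq]]; auto.
  - intros c Hc'. apply Hchi in Hc'. apply Hc. tauto.
  - intros u _. rewrite HO. apply ord_irrefl.
  - intros u v w _ _ _. rewrite !HO. apply ord_trans.
  - intros u v Hu Hv Hne. rewrite !HO. apply Hchi in Hu, Hv. apply (ord_total t); tauto.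
  - apply Hchi. auto.
  - apply (acl_n_intro M A psi e' b [b]); auto. intros c Hc'. left. symmetry. apply Huniq; auto.
Qed.

Definition free_key (A : M -> Prop) (t : M) : Prop :=
  RKey M t /\ A t /\ forall y, A y -> ~ RBelow M t y.

Lemma acl_dichotomy (A : M -> Prop) b : acl M A b ->
  acl_n M A 1 b \/
  exists t l, free_key A t /\ (forall u, RInBlock M t u -> In u l) /\ RInBlock M t b.
Proof.
  intros [n [phi [k [a [Hb [HA [Hs [l [Hl Hc]]]]]]]]].
  destruct (linked_of_acl phi k (length l) (scons b a) Hb Hs) as [j [Hj Hlink]];
    [exists l; split; auto|].
  destruct Hlink as [Heq | [Hbl | [Hbl | [z [Hz1 Hz2]]]]]; cbn in *.
  - left. apply (acl_n_intro M A (fEq (tvar 0) (tvar 1)) (fun _ => a j) b [b]); auto.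
    intros c Hc'. left. cbn in Hc'. congruence.
  - destruct (classic (exists y, A y /\ RBelow M (a j) y)) as [[y [Hy Hr]]|Hnr].
    + left. apply (acl1_of_below A phi k a l (a j) y b); auto. apply in_block_same; auto.
    + right. exists (a j), l. repeat split; auto.
      * apply (key_is_key _ b); auto.
      * intros y Hy Hr. apply Hnr. eauto.
      * intros u Hu. apply Hc. apply (rot_block_closed phi k j (scons b a) Hb); auto.
        -- apply (key_is_key _ b); auto.
        -- intros j' Hj' Hr. apply Hnr. exists (a j'). split; auto.
  - left. apply (acl_n_intro M A (aInBlock 0 1) (fun _ => a j) b [b]); auto.
    + rewrite sat_aInBlock. auto.
    + intros c Hc'. rewrite sat_aInBlock in Hc'. left. apply (key_unique b c (a j)); auto.
  - left. apply (acl1_of_below A phi k a l (a j) (a j) b); auto.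
    + apply (block_below_self z); auto.
    + apply (block_same_block z); auto.
Qed.

Lemma acl_degree_bounded (A : M -> Prop) :
  exists n, 1 <= n /\ forall b, acl M A b -> acl_n M A n b.
Proof.
  destruct (classic (exists k0 l0, free_key A k0 /\ forall u, RInBlock M k0 u -> In u l0))
    as [[k0 [l0 [(Hk0 & HA0 & Hfree0) Hl0]]]|Hnone].
  - exists (max 1 (length l0)). split; [lia|]. intros b Hb.
    destruct (acl_dichotomy A b Hb) as [H|[t [l [(Ht & HAt & Hfree) [_ Htb]]]]];
      [eapply acl_n_mono; eauto; lia|].
    destruct (incomparable_keys_size (length l0) k0 t) as [l' [Hl' Hc']]; eauto.
    apply (acl_n_intro M A (aInBlock 1 0) (fun _ => t) b l'); auto.
    + rewrite sat_aInBlock. auto.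
    + lia.
    + intros c Hc. rewrite sat_aInBlock in Hc. auto.
  - exists 1. split; auto. intros b Hb.
    destruct (acl_dichotomy A b Hb) as [H|[t [l [Hfree [Hl _]]]]]; auto.
    exfalso. apply Hnone. eauto.
Qed.

End ModelsOfTh.

Lemma degT_keyed_blocks : degT_is (Th Mkb) dOmega.
Proof.
  apply degT_Th_omega.
  - constructor. exact (EKey 0 0 (fun _ => 0%Z)).
  - exact acl_degree_bounded.
  - exact acl_degree_unbounded.
Qed.

Theorem mainTheorem4 :
  (forall (L : signature) (T : theory L), complete_theory T ->
     exists d : dval, degT_is T d /\ d <> dFin 0) /\
  (forall lam : dval, lam <> dFin 0 ->
     exists (L : signature) (T : theory L), complete_theory T /\ degT_is T lam).
Proof.
  split; [exact @degT_exists|].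
  intros [[|n]| |] Hlam; [congruence| | |].
  - exists L_empty, (Th (pure_set (S n))). split.
    + apply Th_complete. constructor. exact Fin.F1.
    + apply degT_pure_set. lia.
  - exists L_kb, (Th Mkb). split.
    + apply Th_complete. constructor. exact (EKey 0 0 (fun _ => 0%Z)).
    + exact degT_keyed_blocks.
  - exists L_sized, (Th sized_blocks). split.
    + apply Th_complete. constructor. exact (existT _ 1 Fin.F1).
    + exact degT_sized_blocks.
Qed.
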